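(* Let $\mathscr V$ be a monoidal category. The forgetful (inclusion) 2-functor ${}_{\mathscr V}\mathrm{GCAT}^{\cdot\mathrm{pres}}\to{}_{\mathscr V}\mathrm{GCAT}$ has a left biadjoint whose unit components are fully faithful $\mathscr V$-graded functors that are injective on objects. More precisely, for every left $\mathscr V$-graded category $\mathscr C$ there exist a left $\mathscr V$-graded category $\mathscr C_\cdot$ with all $\mathscr V$-copowers and a $\mathscr V$-graded functor $E\colon\mathscr C\to\mathscr C_\cdot$ such that: (1) for every left $\mathscr V$-graded category $\mathscr D$ with all $\mathscr V$-copowers, the functor $(-)\circ E\colon{}_{\mathscr V}\mathrm{GCAT}^{\cdot\mathrm{pres}}(\mathscr C_\cdot,\mathscr D)\to{}_{\mathscr V}\mathrm{GCAT}(\mathscr C,\mathscr D)$ is an equivalence of categories; (2) $E$ is fully faithful and injective on objects; (3) every object of $\mathscr C_\cdot$ is a copower of some object $EA$ ($A\in\mathrm{ob}\,\mathscr C$) by some $X\in\mathrm{ob}\,\mathscr V$.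
   Context: Fix a universe SET; $\mathscr V=(\mathscr V,\otimes,I,a,\ell,r)$ is a SET-small monoidal category. A left $\mathscr V$-graded category $\mathscr C$ consists of: a set $\mathrm{ob}\,\mathscr C$; sets $\mathscr C_X(A,B)$ of graded morphisms of grade $X\in\mathrm{ob}\,\mathscr V$; reindexings $\alpha^*(f)\in\mathscr C_Y(A,B)$ for $f\in\mathscr C_X(A,B)$, $\alpha\colon Y\to X$; composites $g\circ f\in\mathscr C_{Y\otimes X}(A,C)$ for $f\in\mathscr C_X(A,B)$, $g\in\mathscr C_Y(B,C)$; identities $\mathsf i_A\in\mathscr C_I(A,A)$; subject to $1^*f=f$, $(\beta\alpha)^*f=\alpha^*\beta^*f$, $\beta^*g\circ\alpha^*f=(\beta\otimes\alpha)^*(g\circ f)$, $(h\circ g)\circ f=a^*(h\circ(g\circ f))$, $f\circ\mathsf i_A=r_X^*f$, $\mathsf i_B\circ f=\ell_X^*f$. $\mathscr V$-graded functors preserve objects' assignment, reindexing, composition, identities; they are fully faithful if each map $\mathscr C_X(A,B)\to\mathscr D_X(FA,FB)$ is bijective. A $\mathscr V$-graded natural transformation $\delta\colon F\Rightarrow G$ is a family $\delta_A\in\mathscr D_I(FA,GA)$ with $(\ell_X^{-1})^*(\delta_B\circ Ff)=(r_X^{-1})^*(Gf\circ\delta_A)$; 2-category ${}_{\mathscr V}\mathrm{GCAT}$. A copower of $A\in\mathrm{ob}\,\mathscr C$ by $X\in\mathrm{ob}\,\mathscr V$ is an object $X\cdot A$ with $\upsilon\in\mathscr C_X(A,X\cdot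 A)$ such that for all $B$, $Y$ the map $\mathscr C_Y(X\cdot A,B)\to\mathscr C_{Y\otimes X}(A,B)$, $f\mapsto f\circ\upsilon$, is bijective. A $\mathscr V$-graded functor $F$ preserves it if $(F(X\cdot A),F\upsilon)$ is a copower of $FA$ by $X$. ${}_{\mathscr V}\mathrm{GCAT}^{\cdot\mathrm{pres}}$ is the sub-2-category of ${}_{\mathscr V}\mathrm{GCAT}$ whose objects have all copowers by all objects of $\mathscr V$, whose 1-cells preserve such copowers, and with all 2-cells between them. *)

Set Implicit Arguments.
Unset Strict Implicit.

Record Category := {
  cob :> Type;
  chom : cob -> cob -> Type;
  cid : forall X, chom X X;
  ccomp : forall X Y Z, chom Y Z -> chom X Y -> chom X Z;
  ccomp_id_l : forall X Y (f : chom X Y), ccomp (cid Y) f = f;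
  ccomp_id_r : forall X Y (f : chom X Y), ccomp f (cid X) = f;
  ccomp_assoc : forall W X Y Z (h : chom Y Z) (g : chom X Y) (f : chom W X),
      ccomp h (ccomp g f) = ccomp (ccomp h g) f
}.
Arguments cid {c} X.
Arguments ccomp {c X Y Z} _ _.

Record MonoidalCategory := {
  mcat :> Category;
  tens : mcat -> mcat -> mcat;
  tensh : forall X X' Y Y', chom X X' -> chom Y Y' -> chom (tens X Y) (tens X' Y');
  tensh_id : forall X Y, tensh (cid X) (cid Y) = cid (tens X Y);
  tensh_comp : forall X X' X'' Y Y' Y'' (f : chom X X') (f' : chom X' X'')
      (g : chom Y Y') (g' : chom Y' Y''),
      tensh (ccomp f' f) (ccomp g' g) = ccomp (tensh f' g') (tensh f g);
  munit : mcat;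
  massoc : forall X Y Z, chom (tens (tens X Y) Z) (tens X (tens Y Z));
  massoc_inv : forall X Y Z, chom (tens X (tens Y Z)) (tens (tens X Y) Z);
  massoc_inv_l : forall X Y Z, ccomp (massoc_inv X Y Z) (massoc X Y Z) = cid _;
  massoc_inv_r : forall X Y Z, ccomp (massoc X Y Z) (massoc_inv X Y Z) = cid _;
  massoc_nat : forall X X' Y Y' Z Z' (f : chom X X') (g : chom Y Y') (h : chom Z Z'),
      ccomp (massoc X' Y' Z') (tensh (tensh f g) h)
      = ccomp (tensh f (tensh g h)) (massoc X Y Z);
  mlunit : forall X, chom (tens munit X) X;
  mlunit_inv : forall X, chom X (tens munit X);
  mlunit_inv_l : forall X, ccomp (mlunit_inv X) (mlunit X) = cid _;
  mlunit_inv_r : forall X, ccomp (mlunit X) (mlunit_inv X) = cid _;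
  mlunit_nat : forall X Y (f : chom X Y),
      ccomp (mlunit Y) (tensh (cid munit) f) = ccomp f (mlunit X);
  mrunit : forall X, chom (tens X munit) X;
  mrunit_inv : forall X, chom X (tens X munit);
  mrunit_inv_l : forall X, ccomp (mrunit_inv X) (mrunit X) = cid _;
  mrunit_inv_r : forall X, ccomp (mrunit X) (mrunit_inv X) = cid _;
  mrunit_nat : forall X Y (f : chom X Y),
      ccomp (mrunit Y) (tensh f (cid munit)) = ccomp f (mrunit X);
  pentagon : forall W X Y Z,
      ccomp (massoc W X (tens Y Z)) (massoc (tens W X) Y Z)
      = ccomp (tensh (cid W) (massoc X Y Z))
          (ccomp (massoc W (tens X Y) Z) (tensh (massoc W X Y) (cid Z)));
  triangle : forall X Y,
      ccomp (tensh (cid X) (mlunit Y)) (massoc X munit Y)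
      = tensh (mrunit X) (cid Y)
}.
Arguments tens {m} _ _.
Arguments tensh {m X X' Y Y'} _ _.
Arguments munit {m}.
Arguments massoc {m} X Y Z.
Arguments mlunit {m} X.
Arguments mlunit_inv {m} X.
Arguments mrunit {m} X.
Arguments mrunit_inv {m} X.

Record GradedCategory (V : MonoidalCategory) := {
  gob :> Type;
  (* ghom X A B = C_X(A,B), morphisms of grade X *)
  ghom : V -> gob -> gob -> Type;
  reix : forall (X Y : V) (A B : gob), chom Y X -> ghom X A B -> ghom Y A B;
  gcomp : forall (X Y : V) (A B C : gob),
      ghom Y B C -> ghom X A B -> ghom (tens Y X) A C;
  gid : forall A, ghom munit A A;
  reix_id : forall X A B (f : ghom X A B), reix (cid X) f = f;
  reix_comp : forall (X Y Z : V) A B (beta : chom Y X) (alpha : chom Z Y)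
      (f : ghom X A B), reix (ccomp beta alpha) f = reix alpha (reix beta f);
  gcomp_reix : forall (X X' Y Y' : V) A B C (alpha : chom X' X) (beta : chom Y' Y)
      (f : ghom X A B) (g : ghom Y B C),
      gcomp (reix beta g) (reix alpha f) = reix (tensh beta alpha) (gcomp g f);
  gcomp_assoc : forall (X Y Z : V) A B C D
      (f : ghom X A B) (g : ghom Y B C) (h : ghom Z C D),
      gcomp (gcomp h g) f = reix (massoc Z Y X) (gcomp h (gcomp g f));
  gcomp_id_r : forall X A B (f : ghom X A B), gcomp f (gid A) = reix (mrunit X) f;
  gcomp_id_l : forall X A B (f : ghom X A B), gcomp (gid B) f = reix (mlunit X) f
}.
Arguments ghom {V g0} X A B : rename.
Arguments reix {V g0 X Y A B} _ _ : rename.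
Arguments gcomp {V g0 X Y A B C} _ _ : rename.
Arguments gid {V g0} A : rename.

Record GradedFunctor (V : MonoidalCategory) (C D : GradedCategory V) := {
  fob :> C -> D;
  fhom : forall (X : V) (A B : C), ghom X A B -> ghom X (fob A) (fob B);
  fhom_reix : forall (X Y : V) (A B : C) (alpha : chom Y X) (f : ghom X A B),
      fhom (reix alpha f) = reix alpha (fhom f);
  fhom_comp : forall (X Y : V) (A B E : C) (f : ghom X A B) (g : ghom Y B E),
      fhom (gcomp g f) = gcomp (fhom g) (fhom f);
  fhom_id : forall A : C, fhom (gid A) = gid (fob A)
}.
Arguments fhom {V C D} g {X A B} _ : rename.

Definition gfun_comp (V : MonoidalCategory) (C D E : GradedCategory V)
  (G : GradedFunctor D E) (F : GradedFunctor C D) : GradedFunctor C E.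
Proof.
  refine {| fob := fun A => G (F A);
            fhom := fun X A B f => fhom G (fhom F f) |}.
  - intros. rewrite fhom_reix, fhom_reix. reflexivity.
  - intros. rewrite fhom_comp, fhom_comp. reflexivity.
  - intros. rewrite fhom_id, fhom_id. reflexivity.
Defined.

Definition fully_faithful (V : MonoidalCategory) (C D : GradedCategory V)
  (F : GradedFunctor C D) : Prop :=
  forall (X : V) (A B : C),
    exists g : ghom X (F A) (F B) -> ghom X A B,
      (forall f, g (fhom F f) = f) /\ (forall h, fhom F (g h) = h).

Definition injective_on_objects (V : MonoidalCategory) (C D : GradedCategory V)
  (F : GradedFunctor C D) : Prop :=
  forall A B : C, F A = F B -> A = B.

Record GradedNat (V : MonoidalCategory) (C D : GradedCategory V)
    (F G : GradedFunctor C D) := {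
  ncomp :> forall A : C, ghom munit (F A) (G A);
  nnat : forall (X : V) (A B : C) (f : ghom X A B),
      reix (mlunit_inv X) (gcomp (ncomp B) (fhom F f))
      = reix (mrunit_inv X) (gcomp (fhom G f) (ncomp A))
}.

Definition whisker (V : MonoidalCategory) (C C' D : GradedCategory V)
  (E : GradedFunctor C C') (F G : GradedFunctor C' D) (d : GradedNat F G)
  : GradedNat (gfun_comp F E) (gfun_comp G E).
Proof.
  refine (@Build_GradedNat V C D (gfun_comp F E) (gfun_comp G E) (fun A => d (E A)) _).
  intros X A B f. simpl. apply (nnat d).
Defined.

Definition nat_eq (V : MonoidalCategory) (C D : GradedCategory V)
  (F G : GradedFunctor C D) (d e : GradedNat F G) : Prop :=
  forall A : C, d A = e A.

Definition vcomp_comp (V : MonoidalCategory) (C D : GradedCategory V)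
  (F G H : GradedFunctor C D) (e : GradedNat G H) (d : GradedNat F G) (A : C)
  : ghom munit (F A) (H A) :=
  reix (mlunit_inv munit) (gcomp (e A) (d A)).

Definition nat_iso (V : MonoidalCategory) (C D : GradedCategory V)
  (F G : GradedFunctor C D) : Prop :=
  exists (d : GradedNat F G) (e : GradedNat G F),
    (forall A : C, vcomp_comp e d A = gid (F A)) /\
    (forall A : C, vcomp_comp d e A = gid (G A)).

Definition is_copower (V : MonoidalCategory) (C : GradedCategory V)
  (A : C) (X : V) (XA : C) (u : ghom X A XA) : Prop :=
  forall (B : C) (Y : V),
    exists g : ghom (tens Y X) A B -> ghom Y XA B,
      (forall f, g (gcomp f u) = f) /\ (forall h, gcomp (g h) u = h).

Definition has_copowers (V : MonoidalCategory) (C : GradedCategory V) : Prop :=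
  forall (A : C) (X : V), exists (XA : C) (u : ghom X A XA), is_copower u.

Definition preserves_copowers (V : MonoidalCategory) (C D : GradedCategory V)
  (F : GradedFunctor C D) : Prop :=
  forall (A : C) (X : V) (XA : C) (u : ghom X A XA),
    is_copower u -> is_copower (fhom F u).

(* The functor (-) o E : GCAT^pres(C', D) -> GCAT(C, D) is an equivalence of
   categories: fully faithful on 2-cells and essentially surjective. *)
Definition precomp_equivalence (V : MonoidalCategory) (C C' D : GradedCategory V)
  (E : GradedFunctor C C') : Prop :=
  (forall F G : GradedFunctor C' D, preserves_copowers F -> preserves_copowers G ->
     (forall d d' : GradedNat F G,
        nat_eq (whisker E d) (whisker E d') -> nat_eq d d') /\
     (forall e : GradedNat (gfun_comp F E) (gfun_comp G E),
        exists d : GradedNat F G, nat_eq (whisker E d) e)) /\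
  (forall H : GradedFunctor C D,
     exists F : GradedFunctor C' D, preserves_copowers F /\ nat_iso (gfun_comp F E) H).

(** The copower completion [Cdot C] has as objects formal copowers [X·A], i.e. pairs
    [(X, A)], and as morphisms of grade [Y] from [X·A] to [X'·A'] the elements of the coend
    [∫^W V(Y ⊗ X, X' ⊗ W) × C_W(A, A')], realised as classes of triples [(W, φ, f)].
    The embedding sends [A] to [I·A] and [f] to the class of [(l⁻¹ r, f)], so it is
    fully faithful by the coend (Yoneda) reduction.  Each [X·A] is the copower of [I·A]
    by [X], and every morphism [m] out of [X·A] satisfies [m ∘ u = φ^*(u' ∘ E f)], where
    [u], [u'] are these copower injections.  Hence copower-preserving functors and
    transformations out of [Cdot C] are determined by their restrictions along the
    embedding; conversely a functor [H : C -> D] into a category with copowers extends by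
    sending [X·A] to a chosen copower of [H A] by [X], the action on morphisms being
    forced by the universal property of these copowers. *)

From Stdlib Require Import Relation_Operators FunctionalExtensionality PropExtensionality
  ProofIrrelevance ClassicalEpsilon.
Set Implicit Arguments.
Unset Strict Implicit.

Section CategoryFacts.
Context {c : Category}.

Lemma ccomp_rewrite2 (B C D : c) (x : chom C D) (y : chom B C) (z : chom B D) :
  ccomp x y = z -> forall E (r : chom E B), ccomp x (ccomp y r) = ccomp z r.
Proof. intros H E r. rewrite ccomp_assoc, H. reflexivity. Qed.

Lemma ccomp_rewrite3 (A B C D : c) (x : chom C D) (y : chom B C) (w : chom A B)
  (z : chom A D) :
  ccomp x (ccomp y w) = z ->
  forall E (r : chom E A), ccomp x (ccomp y (ccomp w r)) = ccomp z r.
Proof. intros H E r. rewrite (ccomp_assoc y w r), ccomp_assoc, H. reflexivity. Qed.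

Lemma ccomp_cancel_r (A B C : c) (f g : chom B C) (h : chom A B) (h' : chom B A) :
  ccomp h h' = cid _ -> ccomp f h = ccomp g h -> f = g.
Proof.
  intros H1 H2.
  rewrite <- (ccomp_id_r f), <- (ccomp_id_r g), <- H1, !ccomp_assoc, H2. reflexivity.
Qed.

Lemma ccomp_cancel_l (A B C : c) (f g : chom A B) (h : chom B C) (h' : chom C B) :
  ccomp h' h = cid _ -> ccomp h f = ccomp h g -> f = g.
Proof.
  intros H1 H2.
  rewrite <- (ccomp_id_l f), <- (ccomp_id_l g), <- H1, <- !ccomp_assoc, H2. reflexivity.
Qed.

End CategoryFacts.

(* Composites are kept left-associated by [lassoc]; [crewrite L] rewrites with an
   equation [L] whose left-hand side is a composite of up to three morphisms occurring
   as consecutive factors of such a chain. *)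
Ltac lassoc := repeat rewrite <- ccomp_assoc.
Ltac crewrite L :=
  first [ rewrite L
        | erewrite (ccomp_rewrite2 ltac:(eapply L))
        | erewrite (ccomp_rewrite3 ltac:(eapply L))
        | fail 1 "crewrite failed" ]; lassoc.
Ltac crewrite_rev L :=
  first [ rewrite <- L
        | erewrite (ccomp_rewrite2 ltac:(eapply eq_sym; eapply L))
        | erewrite (ccomp_rewrite3 ltac:(eapply eq_sym; eapply L)) ]; lassoc.

Section MonoidalFacts.
Context {V : MonoidalCategory}.
Implicit Types X Y Z W : V.

Lemma tensh_cidl_comp X Y Y' Y'' (f : chom Y Y') (g : chom Y' Y'') :
  tensh (cid X) (ccomp g f) = ccomp (tensh (cid X) g) (tensh (cid X) f).
Proof. rewrite <- tensh_comp, ccomp_id_l. reflexivity. Qed.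

Lemma tensh_cidr_comp X Y Y' Y'' (f : chom Y Y') (g : chom Y' Y'') :
  tensh (ccomp g f) (cid X) = ccomp (tensh g (cid X)) (tensh f (cid X)).
Proof. rewrite <- tensh_comp, ccomp_id_l. reflexivity. Qed.

Lemma tensh_split X X' Y Y' (f : chom X X') (g : chom Y Y') :
  tensh f g = ccomp (tensh f (cid Y')) (tensh (cid X) g).
Proof. rewrite <- tensh_comp, ccomp_id_l, ccomp_id_r. reflexivity. Qed.

Lemma tensh_split' X X' Y Y' (f : chom X X') (g : chom Y Y') :
  tensh f g = ccomp (tensh (cid X') g) (tensh f (cid Y)).
Proof. rewrite <- tensh_comp, ccomp_id_l, ccomp_id_r. reflexivity. Qed.

Lemma tensh_merge X X' X'' Y Y' Y'' (f : chom X X') (f' : chom X' X'')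
      (g : chom Y Y') (g' : chom Y' Y'') :
  ccomp (tensh f' g') (tensh f g) = tensh (ccomp f' f) (ccomp g' g).
Proof. symmetry; apply tensh_comp. Qed.

Lemma massoc_inv_nat X X' Y Y' Z Z' (f : chom X X') (g : chom Y Y') (h : chom Z Z') :
  ccomp (massoc_inv X' Y' Z') (tensh f (tensh g h))
  = ccomp (tensh (tensh f g) h) (massoc_inv X Y Z).
Proof.
  apply (ccomp_cancel_l (h := massoc X' Y' Z') (h' := massoc_inv X' Y' Z'));
    [apply massoc_inv_l|].
  rewrite ccomp_assoc, massoc_inv_r, ccomp_id_l, ccomp_assoc, massoc_nat,
    <- ccomp_assoc, massoc_inv_r, ccomp_id_r.
  reflexivity.
Qed.

Lemma mlunit_inv_nat X Y (f : chom X Y) :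
  ccomp (mlunit_inv Y) f = ccomp (tensh (cid munit) f) (mlunit_inv X).
Proof.
  apply (ccomp_cancel_l (h := mlunit Y) (h' := mlunit_inv Y)); [apply mlunit_inv_l|].
  rewrite ccomp_assoc, mlunit_inv_r, ccomp_id_l, ccomp_assoc, mlunit_nat,
    <- ccomp_assoc, mlunit_inv_r, ccomp_id_r.
  reflexivity.
Qed.

Lemma mrunit_inv_nat X Y (f : chom X Y) :
  ccomp (mrunit_inv Y) f = ccomp (tensh f (cid munit)) (mrunit_inv X).
Proof.
  apply (ccomp_cancel_l (h := mrunit Y) (h' := mrunit_inv Y)); [apply mrunit_inv_l|].
  rewrite ccomp_assoc, mrunit_inv_r, ccomp_id_l, ccomp_assoc, mrunit_nat,
    <- ccomp_assoc, mrunit_inv_r, ccomp_id_r.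
  reflexivity.
Qed.

Lemma tensh_unitl_inj X Y (f g : chom X Y) :
  tensh (cid munit) f = tensh (cid munit) g -> f = g.
Proof.
  intro H. apply (ccomp_cancel_r (h := mlunit X) (h' := mlunit_inv X)); [apply mlunit_inv_r|].
  rewrite <- !mlunit_nat, H. reflexivity.
Qed.

Lemma tensh_unitr_inj X Y (f g : chom X Y) :
  tensh f (cid munit) = tensh g (cid munit) -> f = g.
Proof.
  intro H. apply (ccomp_cancel_r (h := mrunit X) (h' := mrunit_inv X)); [apply mrunit_inv_r|].
  rewrite <- !mrunit_nat, H. reflexivity.
Qed.

(* Kelly's consequences of the pentagon and triangle axioms. *)
Lemma mlunit_massoc X Y :
  ccomp (mlunit (tens X Y)) (massoc munit X Y) = tensh (mlunit X) (cid Y).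
Proof.
  apply tensh_unitl_inj.
  apply (ccomp_cancel_r
           (h := ccomp (massoc munit (tens munit X) Y) (tensh (massoc munit munit X) (cid Y)))
           (h' := ccomp (tensh (massoc_inv munit munit X) (cid Y))
                        (massoc_inv munit (tens munit X) Y))).
  { lassoc. crewrite tensh_merge.
    rewrite massoc_inv_r, ccomp_id_l, tensh_id, ccomp_id_l. apply massoc_inv_r. }
  rewrite tensh_cidl_comp. lassoc. crewrite_rev pentagon. crewrite triangle.
  rewrite <- (tensh_id X Y), <- massoc_nat.
  rewrite (ccomp_assoc (tensh (cid munit) (tensh (mlunit X) (cid Y)))), <- massoc_nat.
  rewrite <- !ccomp_assoc, <- tensh_comp, ccomp_id_l, triangle. reflexivity.
Qed.

Lemma mrunit_massoc X Y :
  ccomp (tensh (cid X) (mrunit Y)) (massoc X Y munit) = mrunit (tens X Y).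
Proof.
  apply tensh_unitr_inj.
  apply (ccomp_cancel_l (h := massoc X Y munit) (h' := massoc_inv X Y munit));
    [apply massoc_inv_l|].
  rewrite tensh_cidr_comp. lassoc. crewrite massoc_nat.
  rewrite <- (triangle Y munit), !tensh_cidl_comp. lassoc.
  crewrite_rev pentagon. crewrite_rev massoc_nat. rewrite tensh_id. crewrite triangle.
  reflexivity.
Qed.

Lemma mlunit_munit : mlunit (@munit V) = mrunit munit.
Proof.
  apply tensh_unitr_inj. rewrite <- triangle, <- mlunit_massoc. f_equal.
  apply (ccomp_cancel_l (h := mlunit munit) (h' := mlunit_inv munit)); [apply mlunit_inv_l|].
  rewrite mlunit_nat. reflexivity.
Qed.

Lemma mlunit_massoc_inv X Y :
  ccomp (tensh (mlunit X) (cid Y)) (massoc_inv munit X Y) = mlunit (tens X Y).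
Proof. rewrite <- mlunit_massoc, <- ccomp_assoc, massoc_inv_r, ccomp_id_r. reflexivity. Qed.

Lemma mrunit_massoc_inv X Y :
  ccomp (mrunit (tens X Y)) (massoc_inv X Y munit) = tensh (cid X) (mrunit Y).
Proof. rewrite <- mrunit_massoc, <- ccomp_assoc, massoc_inv_r, ccomp_id_r. reflexivity. Qed.

Lemma triangle_inv X Y :
  ccomp (tensh (mrunit X) (cid Y)) (massoc_inv X munit Y) = tensh (cid X) (mlunit Y).
Proof. rewrite <- triangle, <- ccomp_assoc, massoc_inv_r, ccomp_id_r. reflexivity. Qed.

Lemma triangle_retract Y X :
  ccomp (tensh (cid Y) (mlunit X))
        (ccomp (massoc Y munit X) (tensh (mrunit_inv Y) (cid X))) = cid _.
Proof.
  rewrite ccomp_assoc, triangle, tensh_merge, mrunit_inv_r, ccomp_id_l, tensh_id.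
  reflexivity.
Qed.

Lemma mlunit_inv_massoc X Y :
  ccomp (massoc munit X Y) (tensh (mlunit_inv X) (cid Y)) = mlunit_inv (tens X Y).
Proof.
  apply (ccomp_cancel_l (h := mlunit (tens X Y)) (h' := mlunit_inv (tens X Y)));
    [apply mlunit_inv_l|].
  rewrite mlunit_inv_r, ccomp_assoc, mlunit_massoc, tensh_merge, mlunit_inv_r, ccomp_id_l,
    tensh_id.
  reflexivity.
Qed.

Lemma mrunit_inv_massoc_inv X Y :
  ccomp (massoc_inv X Y munit) (tensh (cid X) (mrunit_inv Y)) = mrunit_inv (tens X Y).
Proof.
  apply (ccomp_cancel_l (h := mrunit (tens X Y)) (h' := mrunit_inv (tens X Y)));
    [apply mrunit_inv_l|].
  rewrite mrunit_inv_r, ccomp_assoc, mrunit_massoc_inv, tensh_merge, mrunit_inv_r,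
    ccomp_id_l, tensh_id.
  reflexivity.
Qed.

End MonoidalFacts.

(* Quotient of [T] by the equivalence relation generated by [R], as the type of its
   equivalence classes; representatives are picked by choice. *)
Notation crst R := (clos_refl_sym_trans _ R).

Definition quot {T : Type} (R : T -> T -> Prop) : Type :=
  { P : T -> Prop | exists x, P = crst R x }.

Definition qclass {T : Type} {R : T -> T -> Prop} (x : T) : quot R :=
  exist _ (crst R x) (ex_intro _ x eq_refl).

Definition qrepr {T : Type} {R : T -> T -> Prop} (q : quot R) : T :=
  proj1_sig (constructive_indefinite_description _ (proj2_sig q)).

Section Quotients.
Context {T U : Type} {R : T -> T -> Prop}.

Lemma crst_map (S : U -> U -> Prop) (f : T -> U) :
  (forall x y, R x y -> crst S (f x) (f y)) ->
  forall x y, crst R x y -> crst S (f x) (f y).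
Proof.
  intros H x y Exy. induction Exy.
  - apply H; assumption.
  - apply rst_refl.
  - apply rst_sym; assumption.
  - eapply rst_trans; eassumption.
Qed.

Lemma qclass_qrepr (q : quot R) : qclass (qrepr q) = q.
Proof.
  unfold qrepr. destruct (constructive_indefinite_description _ _) as [x Hx]. simpl.
  destruct q as [P HP]. simpl in Hx. subst P. apply subset_eq_compat. reflexivity.
Qed.

Lemma qclass_surj (q : quot R) : exists x, q = qclass x.
Proof. exists (qrepr q). symmetry; apply qclass_qrepr. Qed.

Lemma qclass_eq (x y : T) : crst R x y -> @qclass T R x = qclass y.
Proof.
  intro Hxy. apply subset_eq_compat.
  apply functional_extensionality; intro z.
  apply propositional_extensionality; split; intro Hz.
  - eapply rst_trans; [apply rst_sym; eassumption | assumption].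
  - eapply rst_trans; eassumption.
Qed.

Lemma qrepr_qclass (x : T) : crst R (qrepr (@qclass T R x)) x.
Proof.
  assert (Hx := f_equal (@proj1_sig _ _) (qclass_qrepr (qclass x))). simpl in Hx.
  rewrite Hx. apply rst_refl.
Qed.

Definition qlift (f : T -> U) (q : quot R) : U := f (qrepr q).

Lemma qlift_qclass (f : T -> U) :
  (forall x y, R x y -> f x = f y) -> forall x, qlift f (qclass x) = f x.
Proof.
  intros H x. unfold qlift. generalize (qrepr_qclass x). generalize (@qrepr _ R (qclass x)).
  intros y Exy. induction Exy; [apply H; assumption | reflexivity | symmetry | congruence];
    assumption.
Qed.

End Quotients.

Definition qmap {T U : Type} {R : T -> T -> Prop} {S : U -> U -> Prop} (f : T -> U)
  (q : quot R) : quot S :=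
  qclass (f (qrepr q)).

Lemma qmap_qclass {T U : Type} {R : T -> T -> Prop} (S : U -> U -> Prop) (f : T -> U) :
  (forall x y, R x y -> crst S (f x) (f y)) ->
  forall x, qmap (R := R) (S := S) f (qclass x) = qclass (f x).
Proof. intros H x. unfold qmap. apply qclass_eq, (crst_map H), qrepr_qclass. Qed.

Definition qmap2 {T T' U : Type} {R : T -> T -> Prop} {R' : T' -> T' -> Prop}
  {S : U -> U -> Prop} (f : T -> T' -> U) (q : quot R) (q' : quot R') : quot S :=
  qclass (f (qrepr q) (qrepr q')).

Lemma qmap2_qclass {T T' U : Type} {R : T -> T -> Prop} {R' : T' -> T' -> Prop}
  {S : U -> U -> Prop} (f : T -> T' -> U) :
  (forall x y x', R x y -> crst S (f x x') (f y x')) ->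
  (forall x x' y', R' x' y' -> crst S (f x x') (f x y')) ->
  forall x x', qmap2 (R := R) (R' := R') (S := S) f (qclass x) (qclass x') = qclass (f x x').
Proof.
  intros H1 H2 x x'. apply qclass_eq. eapply rst_trans.
  - apply (crst_map (R := R) (S := S) (f := fun z => f z (qrepr (@qclass _ R' x'))));
      [intros; apply H1; assumption | apply qrepr_qclass].
  - apply (crst_map (R := R') (S := S) (f := fun z => f x z));
      [intros; apply H2; assumption | apply qrepr_qclass].
Qed.

Section GradedFacts.
Context {V : MonoidalCategory} {G : GradedCategory V}.

Lemma reix_reix (X Y Z : V) (A B : G) (be : chom Y X) (al : chom Z Y) (f : ghom X A B) :
  reix al (reix be f) = reix (ccomp be al) f.
Proof. symmetry; apply reix_comp. Qed.

Lemma reix_retract (X Y : V) (A B : G) (al : chom Y X) (be : chom X Y) (x : ghom X A B) :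
  ccomp al be = cid X -> reix be (reix al x) = x.
Proof. intro H. rewrite reix_reix, H. apply reix_id. Qed.

Lemma reix_transpose (X Y : V) (A B : G) (al : chom Y X) (be : chom X Y) (x : ghom X A B)
  (y : ghom Y A B) :
  reix al x = y -> ccomp al be = cid X -> x = reix be y.
Proof. intros <- H. symmetry. apply reix_retract. exact H. Qed.

Lemma reix_inj (X Y : V) (A B : G) (al : chom Y X) (be : chom X Y) (x y : ghom X A B) :
  ccomp al be = cid X -> reix al x = reix al y -> x = y.
Proof. intros H Exy. rewrite <- (reix_retract x H), <- (reix_retract y H), Exy. reflexivity. Qed.

Lemma gcomp_reix_r (X Y X' : V) (A B C : G) (al : chom X' X) (g : ghom Y B C)
  (f : ghom X A B) :
  gcomp g (reix al f) = reix (tensh (cid Y) al) (gcomp g f).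
Proof. rewrite <- (reix_id g) at 1. apply gcomp_reix. Qed.

Lemma gcomp_reix_l (X Y Y' : V) (A B C : G) (be : chom Y' Y) (g : ghom Y B C)
  (f : ghom X A B) :
  gcomp (reix be g) f = reix (tensh be (cid X)) (gcomp g f).
Proof. rewrite <- (reix_id f) at 1. apply gcomp_reix. Qed.

Lemma gcomp_assoc_inv (X Y Z : V) (A B C D : G) (f : ghom X A B) (g : ghom Y B C)
  (h : ghom Z C D) :
  gcomp h (gcomp g f) = reix (massoc_inv Z Y X) (gcomp (gcomp h g) f).
Proof. rewrite gcomp_assoc. symmetry. apply reix_retract. apply massoc_inv_r. Qed.

Lemma copower_cancel (X Y : V) (A XA B : G) (u : ghom X A XA) (h1 h2 : ghom Y XA B) :
  is_copower u -> gcomp h1 u = gcomp h2 u -> h1 = h2.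
Proof.
  intros Hu Eh. destruct (Hu B Y) as [g [g1 _]].
  rewrite <- (g1 h1), <- (g1 h2), Eh. reflexivity.
Qed.

Definition copower_desc (X Y : V) (A XA B : G) (u : ghom X A XA) (Hu : is_copower u)
  (h : ghom (tens Y X) A B) : ghom Y XA B :=
  proj1_sig (constructive_indefinite_description _ (Hu B Y)) h.

Lemma copower_desc_comp (X Y : V) (A XA B : G) (u : ghom X A XA) (Hu : is_copower u)
  (h : ghom (tens Y X) A B) :
  gcomp (copower_desc Hu h) u = h.
Proof.
  unfold copower_desc.
  destruct (constructive_indefinite_description _ (Hu B Y)) as [g [g1 g2]]. apply g2.
Qed.

(* A copower of a copower: [X·(X'·A) = (X ⊗ X')·A]. *)
Lemma copower_comp (X X' : V) (A P K : G) (u' : ghom X' A P) (u'' : ghom (tens X X') A K)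
  (k : ghom X P K) :
  is_copower u' -> is_copower u'' -> gcomp k u' = u'' -> is_copower k.
Proof.
  intros H1 H2 Hk B Y. destruct (H2 B Y) as [g2 [g2a g2b]].
  exists (fun h => g2 (reix (massoc_inv Y X X') (gcomp h u'))). split.
  - intro f. rewrite gcomp_assoc, Hk, reix_retract; [apply g2a | apply massoc_inv_r].
  - intro h. apply (copower_cancel H1).
    rewrite gcomp_assoc, Hk, g2b, reix_retract; [reflexivity | apply massoc_inv_l].
Qed.

Lemma copower_of_retract (X : V) (P K Z : G) (ka : ghom X P K) (c : ghom X P Z)
  (j : ghom munit Z K) (k : ghom munit K Z) :
  is_copower ka -> gcomp j c = reix (mlunit X) ka -> gcomp k ka = reix (mlunit X) c ->
  gcomp k j = reix (mlunit munit) (gid Z) -> is_copower c.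
Proof.
  intros Hka Hj Hk Hkj B Y. destruct (Hka B Y) as [g [ga gb]].
  exists (fun h => reix (mrunit_inv Y) (gcomp (g h) j)). split.
  - intro f.
    assert (Hg : g (gcomp f c) = reix (mrunit_inv Y) (gcomp f k)).
    { rewrite <- (ga (reix (mrunit_inv Y) (gcomp f k))). f_equal.
      rewrite gcomp_reix_l, gcomp_assoc, Hk, gcomp_reix_r, !reix_reix.
      rewrite <- (reix_id (gcomp f c)) at 1. f_equal. symmetry. apply triangle_retract. }
    rewrite Hg, gcomp_reix_l, gcomp_assoc, Hkj, gcomp_reix_r, gcomp_id_r, !reix_reix.
    rewrite <- (reix_id f) at 2. f_equal.
    lassoc. crewrite @triangle_retract. rewrite ccomp_id_l. apply mrunit_inv_r.
  - intro h. rewrite gcomp_reix_l, gcomp_assoc, Hj, gcomp_reix_r, gb, !reix_reix.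
    rewrite <- (reix_id h) at 2. f_equal. lassoc. apply triangle_retract.
Qed.

Lemma copower_mediators_inverse (X : V) (P K Z : G) (ka : ghom X P K) (c : ghom X P Z)
  (j : ghom munit Z K) (k : ghom munit K Z) :
  is_copower c -> gcomp j c = reix (mlunit X) ka -> gcomp k ka = reix (mlunit X) c ->
  gcomp k j = reix (mlunit munit) (gid Z).
Proof.
  intros Hc Hj Hk. apply (copower_cancel Hc).
  rewrite gcomp_assoc, Hj, gcomp_reix_r, Hk, gcomp_reix_l, gcomp_id_l, !reix_reix.
  f_equal. rewrite triangle, mlunit_munit. reflexivity.
Qed.

End GradedFacts.

(* Copowers are unique up to isomorphism, so a functor sending one copower of [P] by [X]
   to a copower sends all of them to copowers. *)
Lemma fhom_copower_unique {V : MonoidalCategory} {C D : GradedCategory V}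
  (F : GradedFunctor C D) (X : V) (P K Z : C) (ka : ghom X P K) (c : ghom X P Z) :
  is_copower ka -> is_copower (fhom F ka) -> is_copower c -> is_copower (fhom F c).
Proof.
  intros Hka HFka Hc.
  destruct (Hc K munit) as [gc [_ Hgc]]. destruct (Hka Z munit) as [gk [_ Hgk]].
  set (j := gc (reix (mlunit X) ka)). set (k := gk (reix (mlunit X) c)).
  assert (Hj : gcomp j c = reix (mlunit X) ka) by apply Hgc.
  assert (Hk : gcomp k ka = reix (mlunit X) c) by apply Hgk.
  assert (Hkj := copower_mediators_inverse Hc Hj Hk).
  apply (copower_of_retract (ka := fhom F ka) (j := fhom F j) (k := fhom F k)); trivial.
  - rewrite <- fhom_comp, Hj, fhom_reix. reflexivity.
  - rewrite <- fhom_comp, Hk, fhom_reix. reflexivity.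
  - rewrite <- fhom_comp, Hkj, fhom_reix, fhom_id. reflexivity.
Qed.

Section CopowerCompletion.
Context {V : MonoidalCategory} (C : GradedCategory V).

(* A representative [(W, φ, f)] of a morphism of grade [Y] from [X·A] to [X'·A']. *)
Record coend_rep (Y X X' : V) (A A' : C) :=
  mkRep { rW : V; rphi : chom (tens Y X) (tens X' rW); rf : ghom rW A A' }.
Arguments mkRep {Y X X' A A' rW} rphi rf.

Definition coend_step (Y X X' : V) (A A' : C) (r r' : coend_rep Y X X' A A') : Prop :=
  exists (W0 W1 : V) (al : chom W0 W1) (phi : chom (tens Y X) (tens X' W0))
         (f : ghom W1 A A'),
    r = mkRep phi (reix al f) /\ r' = mkRep (ccomp (tensh (cid X') al) phi) f.

Definition coend_hom (Y X X' : V) (A A' : C) := quot (@coend_step Y X X' A A').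

Lemma coend_step_qclass (Y X X' : V) (A A' : C) (W0 W1 : V) (al : chom W0 W1)
  (phi : chom (tens Y X) (tens X' W0)) (f : ghom W1 A A') :
  qclass (R := @coend_step Y X X' A A') (mkRep phi (reix al f))
  = qclass (mkRep (ccomp (tensh (cid X') al) phi) f).
Proof. apply qclass_eq, rst_step. do 5 eexists. split; reflexivity. Qed.

Lemma coend_step_crst (Y X X' : V) (A A' : C) (W0 W1 : V) (al : chom W0 W1)
  (phi : chom (tens Y X) (tens X' W0)) (f : ghom W1 A A') (phi' : chom (tens Y X) (tens X' W1)) :
  ccomp (tensh (cid X') al) phi = phi' ->
  crst (@coend_step Y X X' A A') (mkRep phi (reix al f)) (mkRep phi' f).
Proof. intros <-. apply rst_step. do 5 eexists. split; reflexivity. Qed.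

Definition reix_rep (Y Y' X X' : V) (A A' : C) (be : chom Y' Y) (r : coend_rep Y X X' A A')
  : coend_rep Y' X X' A A' :=
  mkRep (ccomp (rphi r) (tensh be (cid X))) (rf r).

(* [Y' ⊗ Y ⊗ X -> Y' ⊗ X' ⊗ W -> X'' ⊗ W' ⊗ W], suitably reassociated. *)
Definition paste (Y Y' X X' X'' W W' : V) (psi : chom (tens Y' X') (tens X'' W'))
  (phi : chom (tens Y X) (tens X' W)) : chom (tens (tens Y' Y) X) (tens X'' (tens W' W)) :=
  ccomp (massoc X'' W' W) (ccomp (tensh psi (cid W)) (ccomp (massoc_inv Y' X' W)
    (ccomp (tensh (cid Y') phi) (massoc Y' Y X)))).

Definition comp_rep (Y Y' X X' X'' : V) (A A' A'' : C) (n : coend_rep Y' X' X'' A' A'')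
  (m : coend_rep Y X X' A A') : coend_rep (tens Y' Y) X X'' A A'' :=
  mkRep (paste (rphi n) (rphi m)) (gcomp (rf n) (rf m)).

Definition id_rep (X : V) (A : C) : coend_rep munit X X A A :=
  mkRep (rW := munit) (ccomp (mrunit_inv X) (mlunit X)) (gid A).

Lemma paste_natr (Y Y' X X' X'' W' W W0 : V) (psi : chom (tens Y' X') (tens X'' W'))
  (phi : chom (tens Y X) (tens X' W0)) (al : chom W0 W) :
  paste psi (ccomp (tensh (cid X') al) phi)
  = ccomp (tensh (cid X'') (tensh (cid W') al)) (paste psi phi).
Proof.
  unfold paste. rewrite tensh_cidl_comp. lassoc.
  crewrite @massoc_inv_nat. crewrite @tensh_merge. rewrite tensh_id, ccomp_id_l, ccomp_id_r.
  rewrite tensh_split', <- (tensh_id X'' W'). lassoc. crewrite massoc_nat. reflexivity.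
Qed.

Lemma paste_natl (Y Y' X X' X'' W' W0' W : V) (psi : chom (tens Y' X') (tens X'' W0'))
  (phi : chom (tens Y X) (tens X' W)) (al : chom W0' W') :
  paste (ccomp (tensh (cid X'') al) psi) phi
  = ccomp (tensh (cid X'') (tensh al (cid W))) (paste psi phi).
Proof. unfold paste. rewrite tensh_cidr_comp. lassoc. crewrite massoc_nat. reflexivity. Qed.

Lemma paste_reix (Y Y' Y0 Y0' X X' X'' W' W : V) (psi : chom (tens Y' X') (tens X'' W'))
  (phi : chom (tens Y X) (tens X' W)) (be : chom Y0' Y') (al : chom Y0 Y) :
  paste (ccomp psi (tensh be (cid X'))) (ccomp phi (tensh al (cid X)))
  = ccomp (paste psi phi) (tensh (tensh be al) (cid X)).
Proof.
  unfold paste. lassoc. crewrite (massoc_nat be al (cid X)).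
  crewrite (@tensh_merge _ _ _ _ _ _ _ be (cid Y') (tensh al (cid X)) phi).
  rewrite ccomp_id_l, (@tensh_split _ _ _ _ _ be (ccomp phi (tensh al (cid X)))),
    <- (tensh_id X' W).
  lassoc. crewrite (massoc_inv_nat be (cid X') (cid W)).
  crewrite (@tensh_merge _ _ _ _ _ _ _ (tensh be (cid X')) psi (cid W) (cid W)).
  rewrite ccomp_id_l. reflexivity.
Qed.

Lemma paste_assoc (Y Y1 Y2 X X1 X2 X3 W W1 W2 : V)
  (chi : chom (tens Y2 X2) (tens X3 W2)) (psi : chom (tens Y1 X1) (tens X2 W1))
  (phi : chom (tens Y X) (tens X1 W)) :
  ccomp (tensh (cid X3) (massoc W2 W1 W)) (paste (paste chi psi) phi)
  = ccomp (paste chi (paste psi phi)) (tensh (massoc Y2 Y1 Y) (cid X)).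
Proof.
  unfold paste. lassoc. rewrite !tensh_cidr_comp. lassoc.
  crewrite_rev pentagon. crewrite massoc_nat. rewrite tensh_id.
  do 2 f_equal.
  apply (ccomp_cancel_l (h := massoc Y2 X2 (tens W1 W)) (h' := massoc_inv Y2 X2 (tens W1 W)));
    [apply massoc_inv_l|].
  crewrite massoc_inv_r. rewrite ccomp_id_l.
  rewrite (ccomp_rewrite2 (pentagon Y2 X2 W1 W)). lassoc.
  erewrite (ccomp_rewrite2 ltac:(eapply (@tensh_merge _ _ _ _ _ _ _
    (massoc_inv Y2 X2 W1) (massoc Y2 X2 W1) (cid W) (cid W)))).
  rewrite massoc_inv_r, ccomp_id_l, tensh_id, ccomp_id_l.
  crewrite massoc_nat. rewrite !tensh_cidl_comp. lassoc. do 2 f_equal.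
  apply (ccomp_cancel_l (h := tensh (cid Y2) (massoc Y1 X1 W))
                        (h' := tensh (cid Y2) (massoc_inv Y1 X1 W))).
  { rewrite tensh_merge, massoc_inv_l, ccomp_id_l, tensh_id. reflexivity. }
  crewrite_rev (pentagon Y2 Y1 X1 W). crewrite massoc_inv_r. rewrite ccomp_id_l.
  crewrite (@tensh_merge _ _ _ _ _ _ _ (cid Y2) (cid Y2) (massoc_inv Y1 X1 W) (massoc Y1 X1 W)).
  rewrite massoc_inv_r, ccomp_id_l, tensh_id, ccomp_id_l.
  rewrite <- (tensh_id Y2 Y1). crewrite massoc_nat. f_equal. apply pentagon.
Qed.

Lemma paste_runit (Y X X' X'' Xb W : V) (psi : chom (tens Y X'') (tens Xb W))
  (th : chom (tens X X') X'') :
  ccomp (tensh (cid Xb) (mrunit W)) (paste psi (ccomp (mrunit_inv X'') th))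
  = ccomp psi (ccomp (tensh (cid Y) th) (massoc Y X X')).
Proof.
  unfold paste. crewrite @mrunit_massoc. crewrite mrunit_nat. crewrite @mrunit_massoc_inv.
  crewrite @tensh_merge. rewrite ccomp_id_l.
  crewrite (mrunit_inv_r X''). rewrite ccomp_id_l. reflexivity.
Qed.

Lemma paste_lunit (Y X X' W : V) (phi : chom (tens Y X) (tens X' W)) :
  ccomp (tensh (cid X') (mlunit W)) (paste (ccomp (mrunit_inv X') (mlunit X')) phi)
  = ccomp phi (tensh (mlunit Y) (cid X)).
Proof.
  unfold paste. crewrite triangle. crewrite @tensh_merge. rewrite ccomp_id_l.
  crewrite (mrunit_inv_r X'). rewrite ccomp_id_l. crewrite @mlunit_massoc_inv.
  crewrite mlunit_nat. rewrite @mlunit_massoc. reflexivity.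
Qed.

Lemma reix_rep_resp (Y Y' X X' : V) (A A' : C) (be : chom Y' Y) (x y : coend_rep Y X X' A A') :
  coend_step x y -> crst (@coend_step Y' X X' A A') (reix_rep be x) (reix_rep be y).
Proof.
  intros [W0 [W1 [al [phi [f [-> ->]]]]]]. apply coend_step_crst. apply ccomp_assoc.
Qed.

Lemma comp_rep_resp_r (Y Y' X X' X'' : V) (A A' A'' : C) (n : coend_rep Y' X' X'' A' A'')
  (x y : coend_rep Y X X' A A') :
  coend_step x y -> crst (@coend_step (tens Y' Y) X X'' A A'') (comp_rep n x) (comp_rep n y).
Proof.
  intros [W0 [W1 [al [phi [f [-> ->]]]]]]. unfold comp_rep; simpl.
  rewrite gcomp_reix_r. apply coend_step_crst. symmetry. apply paste_natr.
Qed.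

Lemma comp_rep_resp_l (Y Y' X X' X'' : V) (A A' A'' : C) (m : coend_rep Y X X' A A')
  (x y : coend_rep Y' X' X'' A' A'') :
  coend_step x y -> crst (@coend_step (tens Y' Y) X X'' A A'') (comp_rep x m) (comp_rep y m).
Proof.
  intros [W0 [W1 [al [phi [f [-> ->]]]]]]. unfold comp_rep; simpl.
  rewrite gcomp_reix_l. apply coend_step_crst. symmetry. apply paste_natl.
Qed.

Definition Cdot_ob := (cob (mcat V) * gob C)%type.

Definition Cdot_hom (Y : V) (P Q : Cdot_ob) := coend_hom Y (fst P) (fst Q) (snd P) (snd Q).

Definition Cdot_reix (X Y : V) (P Q : Cdot_ob) (be : chom Y X) (q : Cdot_hom X P Q)
  : Cdot_hom Y P Q :=
  qmap (reix_rep be) q.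

Definition Cdot_comp (X Y : V) (P Q R : Cdot_ob) (n : Cdot_hom Y Q R) (m : Cdot_hom X P Q)
  : Cdot_hom (tens Y X) P R :=
  qmap2 (fun a b => comp_rep a b) n m.

Definition Cdot_id (P : Cdot_ob) : Cdot_hom munit P P := qclass (id_rep (fst P) (snd P)).

Lemma Cdot_reix_qclass (X Y : V) (P Q : Cdot_ob) (be : chom Y X)
  (r : coend_rep X (fst P) (fst Q) (snd P) (snd Q)) :
  Cdot_reix (P := P) (Q := Q) be (qclass r) = qclass (reix_rep be r).
Proof. apply qmap_qclass. apply reix_rep_resp. Qed.

Lemma Cdot_comp_qclass (X Y : V) (P Q R : Cdot_ob)
  (n : coend_rep Y (fst Q) (fst R) (snd Q) (snd R))
  (m : coend_rep X (fst P) (fst Q) (snd P) (snd Q)) :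
  Cdot_comp (qclass n) (qclass m) = qclass (comp_rep n m).
Proof.
  apply qmap2_qclass; intros *; [apply comp_rep_resp_l | apply comp_rep_resp_r].
Qed.

Lemma Cdot_reix_id (X : V) (P Q : Cdot_ob) (f : Cdot_hom X P Q) : Cdot_reix (cid X) f = f.
Proof.
  destruct (qclass_surj f) as [[W phi g] ->]. rewrite Cdot_reix_qclass.
  unfold reix_rep; simpl. rewrite tensh_id, ccomp_id_r. reflexivity.
Qed.

Lemma Cdot_reix_comp (X Y Z : V) (P Q : Cdot_ob) (be : chom Y X) (al : chom Z Y)
  (f : Cdot_hom X P Q) :
  Cdot_reix (ccomp be al) f = Cdot_reix al (Cdot_reix be f).
Proof.
  destruct (qclass_surj f) as [[W phi g] ->]. rewrite !Cdot_reix_qclass.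
  unfold reix_rep; simpl. rewrite tensh_cidr_comp, ccomp_assoc. reflexivity.
Qed.

Lemma Cdot_comp_reix (X X' Y Y' : V) (P Q R : Cdot_ob) (al : chom X' X) (be : chom Y' Y)
  (f : Cdot_hom X P Q) (g : Cdot_hom Y Q R) :
  Cdot_comp (Cdot_reix be g) (Cdot_reix al f) = Cdot_reix (tensh be al) (Cdot_comp g f).
Proof.
  destruct (qclass_surj f) as [[W phi f'] ->]. destruct (qclass_surj g) as [[W' psi g'] ->].
  rewrite !Cdot_reix_qclass, !Cdot_comp_qclass, Cdot_reix_qclass.
  unfold reix_rep, comp_rep; simpl. rewrite paste_reix. reflexivity.
Qed.

Lemma Cdot_comp_assoc (X Y Z : V) (P Q R S : Cdot_ob) (f : Cdot_hom X P Q)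
  (g : Cdot_hom Y Q R) (h : Cdot_hom Z R S) :
  Cdot_comp (Cdot_comp h g) f = Cdot_reix (massoc Z Y X) (Cdot_comp h (Cdot_comp g f)).
Proof.
  destruct (qclass_surj f) as [[W phi f'] ->]. destruct (qclass_surj g) as [[W' psi g'] ->].
  destruct (qclass_surj h) as [[W'' chi h'] ->].
  rewrite !Cdot_comp_qclass, Cdot_reix_qclass. unfold reix_rep, comp_rep; simpl.
  rewrite gcomp_assoc, coend_step_qclass, paste_assoc. reflexivity.
Qed.

Lemma Cdot_comp_id_r (X : V) (P Q : Cdot_ob) (f : Cdot_hom X P Q) :
  Cdot_comp f (Cdot_id P) = Cdot_reix (mrunit X) f.
Proof.
  destruct (qclass_surj f) as [[W phi f'] ->].
  unfold Cdot_id. rewrite Cdot_comp_qclass, Cdot_reix_qclass.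
  unfold reix_rep, comp_rep, id_rep; simpl.
  rewrite gcomp_id_r, coend_step_qclass, paste_runit, triangle. reflexivity.
Qed.

Lemma Cdot_comp_id_l (X : V) (P Q : Cdot_ob) (f : Cdot_hom X P Q) :
  Cdot_comp (Cdot_id Q) f = Cdot_reix (mlunit X) f.
Proof.
  destruct (qclass_surj f) as [[W phi f'] ->].
  unfold Cdot_id. rewrite Cdot_comp_qclass, Cdot_reix_qclass.
  unfold reix_rep, comp_rep, id_rep; simpl.
  rewrite gcomp_id_l, coend_step_qclass, paste_lunit. reflexivity.
Qed.

Definition Cdot : GradedCategory V :=
  {| gob := Cdot_ob; ghom := Cdot_hom; reix := Cdot_reix; gcomp := Cdot_comp; gid := Cdot_id;
     reix_id := Cdot_reix_id; reix_comp := Cdot_reix_comp; gcomp_reix := Cdot_comp_reix;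
     gcomp_assoc := Cdot_comp_assoc; gcomp_id_r := Cdot_comp_id_r;
     gcomp_id_l := Cdot_comp_id_l |}.

Definition Edot_ob (A : C) : Cdot := (munit, A).

Definition lunit_runit (X : V) : chom (tens X munit) (tens munit X) :=
  ccomp (mlunit_inv X) (mrunit X).

Definition Edot_hom (X : V) (A B : C) (f : ghom X A B)
  : ghom (g0 := Cdot) X (Edot_ob A) (Edot_ob B) :=
  qclass (mkRep (rW := X) (lunit_runit X) f).

Lemma Edot_reix (X Y : V) (A B : C) (al : chom Y X) (f : ghom X A B) :
  Edot_hom (reix al f) = reix (g0 := Cdot) al (Edot_hom f).
Proof.
  unfold Edot_hom; simpl. rewrite coend_step_qclass, Cdot_reix_qclass.
  unfold reix_rep, lunit_runit; simpl.
  rewrite ccomp_assoc, <- mlunit_inv_nat. lassoc. rewrite mrunit_nat. reflexivity.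
Qed.

Lemma paste_lunit_runit (X Y : V) :
  paste (lunit_runit Y) (lunit_runit X) = lunit_runit (tens Y X).
Proof.
  unfold lunit_runit, paste.
  apply (ccomp_cancel_l (h := mlunit (tens Y X)) (h' := mlunit_inv (tens Y X)));
    [apply mlunit_inv_l|].
  crewrite (mlunit_inv_r (tens Y X)). rewrite ccomp_id_l.
  crewrite @mlunit_massoc. crewrite @tensh_merge. rewrite ccomp_id_l.
  crewrite (mlunit_inv_r Y). rewrite ccomp_id_l.
  crewrite @triangle_inv. crewrite @tensh_merge. rewrite ccomp_id_l.
  crewrite (mlunit_inv_r X). rewrite ccomp_id_l.
  apply mrunit_massoc.
Qed.

Lemma Edot_comp (X Y : V) (A B D : C) (f : ghom X A B) (g : ghom Y B D) :
  Edot_hom (gcomp g f) = gcomp (g0 := Cdot) (Edot_hom g) (Edot_hom f).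
Proof.
  unfold Edot_hom; simpl. rewrite Cdot_comp_qclass.
  unfold comp_rep; simpl. rewrite paste_lunit_runit. reflexivity.
Qed.

Lemma Edot_id (A : C) : Edot_hom (gid A) = gid (g0 := Cdot) (Edot_ob A).
Proof.
  unfold Edot_hom; simpl. unfold Cdot_id, id_rep, lunit_runit; simpl. do 2 f_equal.
  rewrite <- mlunit_munit, mlunit_inv_l, mlunit_munit, mrunit_inv_l. reflexivity.
Qed.

Definition Edot : GradedFunctor C Cdot :=
  {| fob := Edot_ob; fhom := Edot_hom;
     fhom_reix := Edot_reix; fhom_comp := Edot_comp; fhom_id := Edot_id |}.

(* The coend [∫^W V(X ⊗ I, I ⊗ W) × C_W(A, B)] collapses to [C_X(A, B)] (Yoneda). *)
Definition Edot_inv_rep (X : V) (A B : C) (r : coend_rep X munit munit A B) : ghom X A B :=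
  reix (ccomp (mlunit (rW r)) (ccomp (rphi r) (mrunit_inv X))) (rf r).

Lemma Edot_inv_rep_resp (X : V) (A B : C) (x y : coend_rep X munit munit A B) :
  coend_step x y -> Edot_inv_rep x = Edot_inv_rep y.
Proof.
  intros [W0 [W1 [al [phi [f [-> ->]]]]]]. unfold Edot_inv_rep; simpl.
  rewrite reix_reix. f_equal. lassoc. crewrite @mlunit_nat. reflexivity.
Qed.

Lemma Edot_fully_faithful : fully_faithful Edot.
Proof.
  intros X A B. exists (qlift (@Edot_inv_rep X A B)). split.
  - intro f. simpl. unfold Edot_hom.
    rewrite (qlift_qclass (@Edot_inv_rep_resp X A B)). unfold Edot_inv_rep, lunit_runit; simpl.
    lassoc. crewrite (mlunit_inv_r X). rewrite ccomp_id_l, mrunit_inv_r. apply reix_id.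
  - intro h. destruct (qclass_surj h) as [[W phi f] ->]. simpl. unfold Edot_hom.
    rewrite (qlift_qclass (@Edot_inv_rep_resp X A B)). unfold Edot_inv_rep; simpl.
    rewrite coend_step_qclass. unfold lunit_runit. do 2 f_equal.
    rewrite ccomp_assoc, <- mlunit_inv_nat. lassoc. rewrite mrunit_inv_l, ccomp_id_r.
    crewrite (mlunit_inv_l W). apply ccomp_id_l.
Qed.

Lemma Edot_injective_on_objects : injective_on_objects Edot.
Proof. intros A B H. simpl in H. unfold Edot_ob in H. congruence. Qed.

(* The copower injection [X'·A -> X''·A] of grade [X] along [θ : X ⊗ X' ≅ X'']. *)
Definition cop_in (X X' X'' : V) (A : C) (th : chom (tens X X') X'')
  : ghom (g0 := Cdot) X (X', A) (X'', A) :=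
  qclass (mkRep (rW := munit) (ccomp (mrunit_inv X'') th) (gid A)).

Lemma cop_in_copower (X X' X'' : V) (A : C) (th : chom (tens X X') X'')
  (th' : chom X'' (tens X X')) :
  ccomp th th' = cid _ -> ccomp th' th = cid _ -> is_copower (cop_in A th).
Proof.
  intros H1 H2 [Xb Ab] Y.
  pose (gr := fun (r : coend_rep (tens Y X) X' Xb A Ab) =>
    mkRep (ccomp (rphi r) (ccomp (massoc_inv Y X X') (tensh (cid Y) th'))) (rf r)).
  assert (Hr : forall x y, coend_step x y -> crst (@coend_step Y X'' Xb A Ab) (gr x) (gr y)).
  { intros x y [W0 [W1 [al [phi [f [-> ->]]]]]]. apply coend_step_crst. apply ccomp_assoc. }
  exists (qmap gr). split.
  - intro f. destruct (qclass_surj f) as [[W psi f'] ->]. simpl. unfold cop_in.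
    rewrite Cdot_comp_qclass. unfold comp_rep; simpl.
    rewrite gcomp_id_r, coend_step_qclass, paste_runit, (qmap_qclass Hr).
    unfold gr; simpl. f_equal. lassoc. crewrite massoc_inv_r.
    rewrite ccomp_id_l, tensh_merge, H1, ccomp_id_l, tensh_id, ccomp_id_r. reflexivity.
  - intro h. destruct (qclass_surj h) as [[W phi f'] ->]. simpl.
    rewrite (qmap_qclass Hr). unfold cop_in, gr; simpl.
    rewrite Cdot_comp_qclass. unfold comp_rep; simpl.
    rewrite gcomp_id_r, coend_step_qclass, paste_runit.
    f_equal. lassoc. crewrite @tensh_merge.
    rewrite ccomp_id_l, H2, tensh_id, ccomp_id_l, massoc_inv_l, ccomp_id_r. reflexivity.
Qed.

Lemma Cdot_has_copowers : has_copowers Cdot.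
Proof.
  intros [X' A] X. exists (tens X X', A), (cop_in A (cid (tens X X'))).
  eapply cop_in_copower; apply ccomp_id_l.
Qed.

Definition cop_unit (X : V) (A : C) : ghom (g0 := Cdot) X (Edot A) (X, A) :=
  cop_in A (mrunit X).

Lemma cop_unit_copower (X : V) (A : C) : is_copower (cop_unit X A).
Proof. eapply cop_in_copower; [apply mrunit_inv_r | apply mrunit_inv_l]. Qed.

Lemma Cdot_generated (Z : Cdot) :
  exists (A : C) (X : V) (u : ghom X (Edot A) Z), is_copower u.
Proof. destruct Z as [X A]. exists A, X, (cop_unit X A). apply cop_unit_copower. Qed.

Lemma cop_unit_munit (A : C) : cop_unit munit A = gid (g0 := Cdot) (Edot A).
Proof.
  unfold cop_unit, cop_in; simpl. unfold Cdot_id, id_rep; simpl.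
  rewrite mlunit_munit. reflexivity.
Qed.

Lemma Cdot_hom_decomp (Y X X' : V) (A A' : C) (m : ghom (g0 := Cdot) Y (X, A) (X', A')) :
  exists (W : V) (phi : chom (tens Y X) (tens X' W)) (f : ghom W A A'),
    gcomp (g0 := Cdot) m (cop_unit X A)
    = reix (g0 := Cdot) phi (gcomp (g0 := Cdot) (cop_unit X' A') (fhom Edot f)).
Proof.
  destruct (qclass_surj m) as [[W phi f] ->]. exists W, phi, f. simpl.
  unfold cop_unit, cop_in, Edot_hom. rewrite !Cdot_comp_qclass, Cdot_reix_qclass.
  unfold comp_rep, reix_rep; simpl.
  rewrite gcomp_id_r, gcomp_id_l, !coend_step_qclass, paste_runit. do 2 f_equal.
  rewrite mrunit_massoc. unfold paste, lunit_runit. lassoc.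
  crewrite triangle. crewrite @tensh_merge. crewrite (mrunit_inv_r X'). rewrite !ccomp_id_l.
  crewrite @triangle_inv. crewrite @tensh_merge. crewrite (mlunit_inv_r W).
  rewrite !ccomp_id_l. crewrite @mrunit_massoc. rewrite mrunit_nat. reflexivity.
Qed.

End CopowerCompletion.

Section Naturality.
Context {V : MonoidalCategory} {C D : GradedCategory V} (F G : GradedFunctor C D)
  (d : forall A : C, ghom munit (F A) (G A)).

Definition nat_lhs (X : V) (A B : C) (m : ghom X A B) : ghom X (F A) (G B) :=
  reix (mlunit_inv X) (gcomp (d B) (fhom F m)).

Definition nat_rhs (X : V) (A B : C) (m : ghom X A B) : ghom X (F A) (G B) :=
  reix (mrunit_inv X) (gcomp (fhom G m) (d A)).

Definition natural_at (X : V) (A B : C) (m : ghom X A B) : Prop := nat_lhs m = nat_rhs m.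

Lemma nat_lhs_comp (X Y : V) (A B B' : C) (u : ghom X A B) (m : ghom Y B B') :
  nat_lhs (gcomp m u) = gcomp (nat_lhs m) (fhom F u).
Proof.
  unfold nat_lhs. rewrite gcomp_reix_l, gcomp_assoc, reix_reix, fhom_comp.
  f_equal. symmetry. apply mlunit_inv_massoc.
Qed.

Lemma nat_rhs_comp (X Y : V) (A B B' : C) (u : ghom X A B) (m : ghom Y B B') :
  natural_at u -> nat_rhs (gcomp m u) = gcomp (nat_rhs m) (fhom F u).
Proof.
  unfold natural_at, nat_lhs, nat_rhs. intro Hu.
  apply reix_transpose with (be := mlunit X) in Hu; [|apply mlunit_inv_l].
  rewrite gcomp_reix_l, gcomp_assoc, Hu, !gcomp_reix_r, gcomp_assoc_inv, <- fhom_comp,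
    !reix_reix.
  f_equal. crewrite @triangle_retract. rewrite ccomp_id_r. symmetry.
  apply mrunit_inv_massoc_inv.
Qed.

Lemma natural_at_comp (X Y : V) (A B B' : C) (u : ghom X A B) (m : ghom Y B B') :
  natural_at u -> natural_at m -> natural_at (gcomp m u).
Proof.
  intros Hu Hm. unfold natural_at. rewrite nat_lhs_comp, nat_rhs_comp, Hm by exact Hu.
  reflexivity.
Qed.

Lemma natural_at_copower_cancel (X Y : V) (A B B' : C) (u : ghom X A B) (m : ghom Y B B') :
  is_copower (fhom F u) -> natural_at u -> natural_at (gcomp m u) -> natural_at m.
Proof.
  intros Hc Hu Hmu. apply (copower_cancel Hc).
  rewrite <- nat_lhs_comp, <- nat_rhs_comp by exact Hu. exact Hmu.
Qed.

Lemma natural_at_reix (X Y : V) (A B : C) (al : chom Y X) (m : ghom X A B) :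
  natural_at m -> natural_at (reix al m).
Proof.
  unfold natural_at, nat_lhs, nat_rhs. intro H.
  rewrite !fhom_reix, gcomp_reix_r, gcomp_reix_l, !reix_reix.
  transitivity (reix al (reix (mlunit_inv X) (gcomp (d B) (fhom F m)))).
  - rewrite reix_reix. f_equal. symmetry. apply mlunit_inv_nat.
  - rewrite H, reix_reix. f_equal. apply mrunit_inv_nat.
Qed.

End Naturality.

Lemma whisker_Edot_inj {V : MonoidalCategory} (C D : GradedCategory V)
  (F G : GradedFunctor (Cdot C) D) :
  preserves_copowers F ->
  forall d d' : GradedNat F G,
    nat_eq (whisker (Edot C) d) (whisker (Edot C) d') -> nat_eq d d'.
Proof.
  intros HF d d' Hdd' [X A]. specialize (Hdd' A). simpl in Hdd'.
  apply (copower_cancel (HF _ _ _ _ (cop_unit_copower X A))).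
  apply (reix_inj (al := mlunit_inv X) (be := mlunit X)); [apply mlunit_inv_l|].
  rewrite (nnat d), (nnat d'). simpl. rewrite Hdd'. reflexivity.
Qed.

Section ExtendTransformation.
Context {V : MonoidalCategory} (C D : GradedCategory V) (F G : GradedFunctor (Cdot C) D)
  (HF : preserves_copowers F) (e : GradedNat (gfun_comp F (Edot C)) (gfun_comp G (Edot C))).

(* The component at [X·A] is forced by naturality at the copower injection [cop_unit X A]. *)
Definition ext_nat (Z : Cdot C) : ghom munit (F Z) (G Z) :=
  let (X, A) as Z return ghom munit (F Z) (G Z) := Z in
  copower_desc (HF (cop_unit_copower X A))
    (reix (ccomp (mrunit_inv X) (mlunit X)) (gcomp (fhom G (cop_unit X A)) (e A))).

Lemma ext_nat_cop_unit (X : V) (A : C) :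
  gcomp (ext_nat (X, A)) (fhom F (cop_unit X A))
  = reix (ccomp (mrunit_inv X) (mlunit X)) (gcomp (fhom G (cop_unit X A)) (e A)).
Proof. apply copower_desc_comp. Qed.

Lemma ext_nat_Edot (A : C) : ext_nat (Edot C A) = e A.
Proof.
  assert (HA := ext_nat_cop_unit munit A).
  rewrite cop_unit_munit, !fhom_id, gcomp_id_r, gcomp_id_l, reix_reix in HA.
  apply reix_transpose with (be := mrunit_inv munit) in HA; [|apply mrunit_inv_r].
  simpl in HA |- *. rewrite HA, reix_reix.
  rewrite <- (reix_id (e A)) at 2. f_equal.
  rewrite mlunit_munit. lassoc. rewrite mrunit_inv_r, ccomp_id_r. apply mrunit_inv_r.
Qed.

Lemma ext_nat_natural_cop_unit (X : V) (A : C) : natural_at ext_nat (cop_unit X A).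
Proof.
  unfold natural_at, nat_lhs, nat_rhs. rewrite ext_nat_cop_unit.
  change (ext_nat (Edot_ob A)) with (ext_nat (Edot C A)). rewrite ext_nat_Edot, reix_reix.
  f_equal. lassoc. rewrite mlunit_inv_r. apply ccomp_id_r.
Qed.

Lemma ext_nat_natural_Edot (X : V) (A B : C) (f : ghom X A B) :
  natural_at ext_nat (fhom (Edot C) f).
Proof. unfold natural_at, nat_lhs, nat_rhs. rewrite !ext_nat_Edot. exact (nnat e f). Qed.

Lemma ext_nat_natural (Y : V) (Z Z' : Cdot C) (m : ghom Y Z Z') : natural_at ext_nat m.
Proof.
  destruct Z as [X A], Z' as [X' A'].
  destruct (Cdot_hom_decomp m) as [W [phi [f Hm]]].
  apply (natural_at_copower_cancel (u := cop_unit X A));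
    [apply HF, cop_unit_copower | apply ext_nat_natural_cop_unit |].
  rewrite Hm. apply natural_at_reix, natural_at_comp;
    [apply ext_nat_natural_Edot | apply ext_nat_natural_cop_unit].
Qed.

Definition ext_nat_trans : GradedNat F G := Build_GradedNat ext_nat_natural.

End ExtendTransformation.

Lemma whisker_Edot_surj {V : MonoidalCategory} (C D : GradedCategory V)
  (F G : GradedFunctor (Cdot C) D) (HF : preserves_copowers F)
  (e : GradedNat (gfun_comp F (Edot C)) (gfun_comp G (Edot C))) :
  exists d : GradedNat F G, nat_eq (whisker (Edot C) d) e.
Proof. exists (ext_nat_trans HF e). intro A. apply ext_nat_Edot. Qed.

Section Extension.
Context {V : MonoidalCategory} (C D : GradedCategory V) (HD : has_copowers D)
  (H : GradedFunctor C D).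

Definition chosen_copower (A : C) (X : V)
  : {XA : D | exists u : ghom X (H A) XA, is_copower u} :=
  constructive_indefinite_description _ (HD (H A) X).

Definition ext_ob (P : Cdot C) : D := proj1_sig (chosen_copower (snd P) (fst P)).

Definition ext_unit_spec (P : Cdot C) :=
  constructive_indefinite_description _ (proj2_sig (chosen_copower (snd P) (fst P))).

Definition ext_unit (P : Cdot C) : ghom (fst P) (H (snd P)) (ext_ob P) :=
  proj1_sig (ext_unit_spec P).

Lemma ext_unit_copower (P : Cdot C) : is_copower (ext_unit P).
Proof. exact (proj2_sig (ext_unit_spec P)). Qed.

Definition ext_hom_rep (Y : V) (P Q : Cdot C)
  (r : coend_rep Y (fst P) (fst Q) (snd P) (snd Q)) : ghom Y (ext_ob P) (ext_ob Q) :=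
  copower_desc (ext_unit_copower P) (reix (rphi r) (gcomp (ext_unit Q) (fhom H (rf r)))).

Lemma ext_hom_rep_resp (Y : V) (P Q : Cdot C)
  (x y : coend_rep Y (fst P) (fst Q) (snd P) (snd Q)) :
  coend_step x y -> ext_hom_rep x = ext_hom_rep y.
Proof.
  intros [W0 [W1 [al [phi [f [-> ->]]]]]]. unfold ext_hom_rep; simpl.
  rewrite fhom_reix, gcomp_reix_r, reix_reix. reflexivity.
Qed.

Definition ext_hom (Y : V) (P Q : Cdot C) (q : ghom (g0 := Cdot C) Y P Q)
  : ghom Y (ext_ob P) (ext_ob Q) :=
  qlift (@ext_hom_rep Y P Q) q.

Lemma ext_hom_qclass (Y : V) (P Q : Cdot C) (r : coend_rep Y (fst P) (fst Q) (snd P) (snd Q)) :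
  gcomp (ext_hom (P := P) (Q := Q) (qclass r)) (ext_unit P)
  = reix (rphi r) (gcomp (ext_unit Q) (fhom H (rf r))).
Proof.
  unfold ext_hom. rewrite (qlift_qclass (@ext_hom_rep_resp Y P Q)). apply copower_desc_comp.
Qed.

Lemma ext_hom_reix (X Y : V) (P Q : Cdot C) (be : chom Y X) (q : ghom (g0 := Cdot C) X P Q) :
  ext_hom (reix (g0 := Cdot C) be q) = reix be (ext_hom q).
Proof.
  destruct (qclass_surj q) as [r ->]. apply (copower_cancel (ext_unit_copower P)). simpl.
  rewrite Cdot_reix_qclass, ext_hom_qclass, gcomp_reix_l, ext_hom_qclass, reix_reix.
  reflexivity.
Qed.

Lemma ext_hom_comp (X Y : V) (P Q R : Cdot C) (m : ghom (g0 := Cdot C) X P Q)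
  (n : ghom (g0 := Cdot C) Y Q R) :
  ext_hom (gcomp (g0 := Cdot C) n m) = gcomp (ext_hom n) (ext_hom m).
Proof.
  destruct (qclass_surj m) as [[W phi f] ->]. destruct (qclass_surj n) as [[W' psi g] ->].
  apply (copower_cancel (ext_unit_copower P)). simpl.
  rewrite Cdot_comp_qclass, ext_hom_qclass. unfold comp_rep; simpl.
  rewrite gcomp_assoc, ext_hom_qclass, gcomp_reix_r, gcomp_assoc_inv, ext_hom_qclass,
    gcomp_reix_l, gcomp_assoc, <- fhom_comp, !reix_reix.
  unfold paste. lassoc. reflexivity.
Qed.

Lemma ext_hom_id (P : Cdot C) : ext_hom (gid (g0 := Cdot C) P) = gid (ext_ob P).
Proof.
  apply (copower_cancel (ext_unit_copower P)). simpl. unfold Cdot_id.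
  rewrite ext_hom_qclass. unfold id_rep; simpl.
  rewrite fhom_id, gcomp_id_r, gcomp_id_l, reix_reix. f_equal.
  rewrite ccomp_assoc, mrunit_inv_r. apply ccomp_id_l.
Qed.

Definition extension : GradedFunctor (Cdot C) D :=
  {| fob := ext_ob; fhom := ext_hom;
     fhom_reix := ext_hom_reix; fhom_comp := ext_hom_comp; fhom_id := ext_hom_id |}.

Lemma extension_cop_in_copower (X X' : V) (A : C) :
  is_copower (fhom extension (cop_in A (cid (tens X X')))).
Proof.
  apply (copower_comp (ext_unit_copower (X', A)) (ext_unit_copower (tens X X', A))).
  etransitivity;
    [exact (ext_hom_qclass (Y := X) (P := (X', A)) (Q := (tens X X', A))
              (mkRep (rW := munit) (ccomp (mrunit_inv (tens X X')) (cid (tens X X'))) (gid A)))|].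
  simpl.
  rewrite fhom_id, gcomp_id_r, reix_reix.
  rewrite <- (reix_id (ext_unit (tens X X', A))) at 2.
  f_equal. rewrite ccomp_id_r. apply mrunit_inv_r.
Qed.

Lemma extension_preserves_copowers : preserves_copowers extension.
Proof.
  intros [X' A] X Z c Hc.
  apply (fhom_copower_unique (ka := cop_in A (cid (tens X X')))); trivial.
  - eapply cop_in_copower; apply ccomp_id_l.
  - apply extension_cop_in_copower.
Qed.

Lemma ext_hom_Edot (X : V) (A B : C) (f : ghom X A B) :
  gcomp (fhom extension (fhom (Edot C) f)) (ext_unit (Edot C A))
  = reix (lunit_runit X) (gcomp (ext_unit (Edot C B)) (fhom H f)).
Proof.
  exact (ext_hom_qclass (P := Edot C A) (Q := Edot C B) (mkRep (rW := X) (lunit_runit X) f)).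
Qed.

Definition ext_counit (A : C) : ghom munit (ext_ob (Edot C A)) (H A) :=
  copower_desc (ext_unit_copower (Edot C A)) (reix (mlunit munit) (gid (H A))).

Lemma ext_counit_comp (A : C) :
  gcomp (ext_counit A) (ext_unit (Edot C A)) = reix (mlunit munit) (gid (H A)).
Proof. apply copower_desc_comp. Qed.

Lemma ext_counit_natural (X : V) (A B : C) (f : ghom X A B) :
  reix (mlunit_inv X) (gcomp (ext_counit B) (fhom (gfun_comp extension (Edot C)) f))
  = reix (mrunit_inv X) (gcomp (fhom H f) (ext_counit A)).
Proof.
  apply (copower_cancel (ext_unit_copower (Edot C A))).
  change (fhom (gfun_comp extension (Edot C)) f) with (fhom extension (fhom (Edot C) f)).
  rewrite !gcomp_reix_l, !gcomp_assoc, ext_hom_Edot, ext_counit_comp, !gcomp_reix_r,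
    gcomp_assoc_inv, ext_counit_comp, gcomp_reix_l, gcomp_id_l, gcomp_id_r, !reix_reix.
  f_equal. simpl. crewrite (triangle X munit). crewrite @tensh_merge.
  rewrite mrunit_inv_r, ccomp_id_l, tensh_id, ccomp_id_r, mlunit_munit.
  crewrite @triangle_inv. unfold lunit_runit. crewrite @tensh_merge. rewrite ccomp_id_l.
  crewrite (mlunit_inv_r X). rewrite ccomp_id_l. crewrite @mrunit_massoc.
  crewrite mrunit_nat. crewrite (mlunit_inv_r X). apply ccomp_id_l.
Qed.

Lemma ext_unit_natural (X : V) (A B : C) (f : ghom X A B) :
  reix (mlunit_inv X) (gcomp (ext_unit (Edot C B)) (fhom H f))
  = reix (mrunit_inv X) (gcomp (fhom (gfun_comp extension (Edot C)) f) (ext_unit (Edot C A))).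
Proof.
  change (fhom (gfun_comp extension (Edot C)) f) with (fhom extension (fhom (Edot C) f)).
  etransitivity; [|symmetry; apply f_equal; apply ext_hom_Edot].
  rewrite reix_reix. f_equal. unfold lunit_runit. lassoc.
  rewrite mrunit_inv_r. symmetry. apply ccomp_id_r.
Qed.

Lemma extension_Edot_iso : nat_iso (gfun_comp extension (Edot C)) H.
Proof.
  exists (Build_GradedNat (F := gfun_comp extension (Edot C)) ext_counit_natural).
  exists (Build_GradedNat (G := gfun_comp extension (Edot C))
            (ncomp := fun A => ext_unit (Edot C A)) ext_unit_natural).
  split; intro A; unfold vcomp_comp.
  - simpl. apply (copower_cancel (ext_unit_copower (Edot C A))).
    rewrite gcomp_reix_l, gcomp_assoc, ext_counit_comp, gcomp_reix_r, gcomp_id_r, gcomp_id_l,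
      !reix_reix.
    f_equal. simpl. crewrite (triangle (m := V) munit munit). crewrite @tensh_merge.
    rewrite <- mlunit_munit, mlunit_inv_r, ccomp_id_l, tensh_id. apply ccomp_id_r.
  - change (reix (mlunit_inv munit) (gcomp (ext_counit A) (ext_unit (Edot C A))) = gid (H A)).
    rewrite ext_counit_comp. apply reix_retract, mlunit_inv_r.
Qed.

End Extension.

Theorem proposition6p1 :
  forall (V : MonoidalCategory) (C : GradedCategory V),
  exists (Cd : GradedCategory V) (E : GradedFunctor C Cd),
    has_copowers Cd /\
    (forall D : GradedCategory V, has_copowers D -> precomp_equivalence D E) /\
    fully_faithful E /\ injective_on_objects E /\
    (forall Z : Cd, exists (A : C) (X : V) (u : ghom X (E A) Z), is_copower u).
Proof.
  intros V C. exists (Cdot C), (Edot C).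
  split; [apply Cdot_has_copowers|].
  split; [|split; [apply Edot_fully_faithful|]; split;
             [apply Edot_injective_on_objects | apply Cdot_generated]].
  intros D HD. split.
  - intros F G HF _. split; [apply whisker_Edot_inj | apply whisker_Edot_surj]; exact HF.
  - intro H. exists (extension HD H).
    split; [apply extension_preserves_copowers | apply extension_Edot_iso].
Qed.
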